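(* Let $m$ be a positive integer, let $\mathcal{N}_r$ be the gadget of size $m$, and let $\pi$ be an $\mathcal{H}^{(\ast)}$-partition of $\mathcal{N}_r$. Then for every $P\in\pi$, the Hamiltonian path of the induced subgraph $\mathcal{N}_r[P]$ has either all its arcs in $\swarrow_r$ or all its arcs in $\searrow_r$.
   Context: The gadget $\mathcal{N}_r=\langle\mathcal{V}_r,\mathcal{E}_r\rangle$ of size $m$ has vertex set $\mathcal{V}_r=\{r_{i,j}:0\le i,j\le m\}$ and arc set $\mathcal{E}_r=\swarrow_r\cup\searrow_r$, where $\swarrow_r=\{\langle r_{i,j},r_{i,j+1}\rangle:0\le i\le m,\ 0\le j<m\}$ and $\searrow_r=\{\langle r_{i,j},r_{i+1,j}\rangle:0\le i<m,\ 0\le j\le m\}$; it is a DAG. For a digraph $G$ and a subset $V_1$ of its vertices, $G[V_1]$ is the induced subgraph. A partition $\pi$ of the vertex set of a DAG $G$ is an $\mathcal{H}^{(\ast)}$-partition if every induced subgraph $G[P]$, $P\in\pi$, has a directed Hamiltonian path (which in a DAG is unique) and the quotient digraph $G/\pi$ (vertex set $\pi$, arc $\langle P,Q\rangle$ for $P\ne Q$ whenever some arc of $G$ goes from $P$ to $Q$) is acyclic. *)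

From mathcomp Require Import all_boot.
Set Implicit Arguments. Unset Strict Implicit. Unset Printing Implicit Defensive.

(* Gadget N_r of size m: vertices r_{i,j}, 0 <= i,j <= m, encoded as pairs (i,j). *)
Definition gvert (m : nat) := ('I_m.+1 * 'I_m.+1)%type.

Definition sw_arc (m : nat) : rel (gvert m) :=
  fun x y => (x.1 == y.1) && (val y.2 == (val x.2).+1).
Definition se_arc (m : nat) : rel (gvert m) :=
  fun x y => (val y.1 == (val x.1).+1) && (x.2 == y.2).
Definition gadget_arc (m : nat) : rel (gvert m) :=
  fun x y => sw_arc x y || se_arc x y.

Definition ham_path (V : finType) (E : rel V) (P : {set V}) (s : seq V) : Prop :=
  [/\ uniq s, s =i P & sorted E s].

Definition quot_arc (V : finType) (E : rel V) (pi : {set {set V}}) : rel {set V} :=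
  fun P Q => [&& P \in pi, Q \in pi, P != Q &
              [exists x in P, exists y in Q, E x y]].

Definition quot_acyclic (V : finType) (E : rel V) (pi : {set {set V}}) : Prop :=
  forall P Q, quot_arc E pi P Q -> ~~ connect (quot_arc E pi) Q P.

Definition Hstar_partition (V : finType) (E : rel V) (pi : {set {set V}}) : Prop :=
  [/\ partition pi [set: V],
      (forall P, P \in pi -> exists s, ham_path E P s)
    & quot_acyclic E pi].

From mathcomp Require Import all_boot.
Set Implicit Arguments. Unset Strict Implicit. Unset Printing Implicit Defensive.

(* If the Hamiltonian path of a block P turned, say x -> y -> z with y the
   corner r_{i,j+1} of a unit square, then the opposite corner w = r_{i+1,j}
   lies on the same antidiagonal i + j + 1 as y. Arcs increase i + j by one,
   so a Hamiltonian path meets each antidiagonal at most once and w is not in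
   P. But x -> w -> z then gives arcs P -> Q -> P of the quotient for the
   block Q of w, a cycle. *)

Lemma Hstar_partition_convex (V : finType) (E : rel V) (pi : {set {set V}})
    (P : {set V}) (a w b : V) :
  Hstar_partition E pi -> P \in pi -> a \in P -> b \in P ->
  E a w -> E w b -> w \in P.
Proof.
case=> /and3P[/eqP cover_pi _ _] _ pi_acyclic Ppi aP bP Eaw Ewb.
apply/negPn/negP => wNP.
have : w \in cover pi by rewrite cover_pi inE.
case/bigcupP=> Q Qpi wQ.
have neqPQ : P != Q by apply: contraNneq wNP => ->.
have arcPQ : quot_arc E pi P Q.
  rewrite /quot_arc Ppi Qpi neqPQ; apply/existsP; exists a; rewrite aP.
  by apply/existsP; exists w; rewrite wQ Eaw.
have arcQP : quot_arc E pi Q P.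
  rewrite /quot_arc Ppi Qpi eq_sym neqPQ; apply/existsP; exists w; rewrite wQ.
  by apply/existsP; exists b; rewrite bP Ewb.
by move: (pi_acyclic _ _ arcPQ); rewrite (connect1 arcQP).
Qed.

Lemma sorted_inj_in (T : eqType) (r : rel T) (f : T -> nat) (s : seq T) :
  {homo f : x y / r x y >-> x < y} -> sorted r s -> {in s &, injective f}.
Proof.
move=> f_homo /(homo_sorted f_homo).
rewrite sorted_pairwise; last exact: ltn_trans.
rewrite pairwise_map; elim: s => //= a s IH /andP[/allP a_lt /IH{}IH] x y.
rewrite !inE => /predU1P[->|xs] /predU1P[->|ys] fxy //; last exact: IH.
- by move: (a_lt y ys); rewrite /= fxy ltnn.
- by move: (a_lt x xs); rewrite /= fxy ltnn.
Qed.

Lemma sorted_relU_without_turns (T : eqType) (r1 r2 : rel T) (s : seq T) :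
  sorted (relU r1 r2) s ->
  (forall x y z, x \in s -> y \in s -> z \in s ->
     ~~ (r1 x y && r2 y z || r2 x y && r1 y z)) ->
  sorted r1 s \/ sorted r2 s.
Proof.
elim: s => [|x s IH] /=; first by left.
case: s IH => [|y s] IH /=; first by left.
move=> /andP[xy sorted_ys] noturn.
have noturn_ys : forall a b c, a \in y :: s -> b \in y :: s -> c \in y :: s ->
    ~~ (r1 a b && r2 b c || r2 a b && r1 b c).
  by move=> a b c ai bi ci; apply: noturn; rewrite inE ?ai ?bi ?ci orbT.
have noturn_xy z : z \in s -> ~~ (r1 x y && r2 y z || r2 x y && r1 y z).
  by move=> zs; apply: noturn; rewrite !inE ?eqxx ?zs ?orbT.
have [ys_sorted|ys_sorted] := IH sorted_ys noturn_ys;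
  clear IH sorted_ys noturn_ys noturn; case: s noturn_xy ys_sorted => [|z s] noturn_xy /= ys_sorted; rewrite ?ys_sorted ?andbT.
all: try by case/orP: xy; [left | right].
all: move: ys_sorted (noturn_xy z (mem_head _ _)) => /andP[-> _].
all: by case/orP: xy => -> /=; rewrite ?orbT //; first [by left | by right].
Qed.

Definition antidiag m (v : gvert m) : nat := val v.1 + val v.2.

Lemma gadget_arc_antidiag m (x y : gvert m) :
  gadget_arc x y -> antidiag x < antidiag y.
Proof.
by rewrite /antidiag => /orP[] /andP[/eqP-> /eqP->]; rewrite ?addnS.
Qed.

Lemma gadget_turn_opposite_corner m (x y z : gvert m) :
  sw_arc x y && se_arc y z || se_arc x y && sw_arc y z ->
  exists w, [/\ gadget_arc x w, gadget_arc w z, w != y & antidiag w = antidiag y].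
Proof.
rewrite /sw_arc /se_arc => /orP[] /andP[] /andP[/eqP xy1 /eqP xy2]
  /andP[/eqP yz1 /eqP yz2].
- exists (z.1, x.2); split.
  + by rewrite /gadget_arc /se_arc /= yz1 xy1 !eqxx orbT.
  + by rewrite /gadget_arc /sw_arc /= -yz2 xy2 !eqxx.
  + by apply/eqP => /(congr1 (fun v => val v.2)) /=; rewrite xy2; apply: n_Sn.
  + by rewrite /antidiag /= yz1 xy2 addnS addSn.
- exists (x.1, z.2); split.
  + by rewrite /gadget_arc /sw_arc /= yz2 -xy2 !eqxx.
  + by rewrite /gadget_arc /se_arc /= -yz1 xy1 !eqxx orbT.
  + by apply/eqP => /(congr1 (fun v => val v.1)) /=; rewrite xy1; apply: n_Sn.
  + by rewrite /antidiag /= yz2 xy1 -xy2 addnS addSn.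
Qed.

Theorem lemma5p2 (m : nat) (Hm : 0 < m) (pi : {set {set gvert m}}) :
  Hstar_partition (@gadget_arc m) pi ->
  forall P, P \in pi ->
  forall s, ham_path (@gadget_arc m) P s ->
  sorted (@sw_arc m) s \/ sorted (@se_arc m) s.
Proof.
move=> Hpi P Ppi s [_ s_P s_sorted].
have antidiag_inj := sorted_inj_in (@gadget_arc_antidiag m) s_sorted.
apply: sorted_relU_without_turns => // x y z xs ys zs; apply/negP => turn.
have [w [xw wz wNy antidiag_wy]] := gadget_turn_opposite_corner turn.
have ws : w \in s.
  by rewrite s_P (Hstar_partition_convex Hpi Ppi _ _ xw wz) // -s_P.
by move: wNy; rewrite (antidiag_inj w y ws ys antidiag_wy) eqxx.
Qed.
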